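(* Let $T$ be a non-abelian finite simple group and $k\geqslant 4$. Then $\mathbb{Q}_k(T)\leqslant 1-\mathbb{P}_{k+1}(T)$.
   Context: Let $T^\#=T\setminus\{1\}$, $\mathscr{S}_k$ the set of $k$-subsets of $T^\#$, $\mathrm{Aut}(T,R)$ the setwise stabiliser of $R\subseteq T^\#$ in $\mathrm{Aut}(T)$, and $\mathbb{Q}_k(T)=|\{R\in\mathscr{S}_k:\mathrm{Aut}(T,R)\neq1\}|/|\mathscr{S}_k|$. For $m\geqslant2$ let $G=W(m,T)=\{(\alpha_1,\dots,\alpha_m)\pi\in\mathrm{Aut}(T)\wr S_m:\alpha_i\mathrm{Inn}(T)\text{ all equal}\}$ act on the right coset space $\Omega=[G:D]$, $D=\{(\alpha,\dots,\alpha)\pi:\alpha\in\mathrm{Aut}(T),\pi\in S_m\}$; for $t\in T$ let $\varphi_t$ be the inner automorphism $x\mapsto t^{-1}xt$. Define $\mathbb{P}_m(T)$ to be the proportion of tuples $(t_1,\dots,t_{m-1})\in T^{m-1}$ such that $\{D,D(\varphi_{t_1},\dots,\varphi_{t_{m-1}},1)\}$ is a base for $G$ (a subset of $\Omega$ with trivial pointwise stabiliser in $G$). *)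

From mathcomp Require Import all_boot all_order all_algebra all_fingroup all_solvable.
Set Implicit Arguments. Unset Strict Implicit. Unset Printing Implicit Defensive.
Import GroupScope.

(* Q_k(T) and P_m(T) for a finite group T (a {group gT}); automorphisms of T are
   MathComp's Aut T : {set {perm gT}} (permutations of gT supported on T that are
   morphisms on T). *)

Section Defs.
Variables (gT : finGroupType) (T : {group gT}).

Definition AutTR (R : {set gT}) : {set {perm gT}} := 'N_(Aut T)(R | 'P).

Definition kSubsets (k : nat) : {set {set gT}} :=
  [set R : {set gT} | (R \subset T^#) && (#|R| == k)].

Definition Qk (k : nat) : rat :=
  (#|[set R in kSubsets k | AutTR R != 1%g]|%:R / #|kSubsets k|%:R)%R.

Definition InnT : {set {perm gT}} := [set conj_aut T t | t in T].

Variable m : nat.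

Definition tupT := {ffun 'I_m -> gT}.

(* the element (alpha_1,...,alpha_m) pi of Aut(T) wr S_m, realised (faithfully)
   as a permutation of gT^m via the product action
   f |-> (i |-> alpha_i (f (pi^-1 i))) *)
Definition wr_fun (a : {ffun 'I_m -> {perm gT}}) (pi : {perm 'I_m}) (f : tupT)
  : tupT := [ffun i => a i (f (pi^-1 i))].

Definition wr_inv (a : {ffun 'I_m -> {perm gT}}) (pi : {perm 'I_m}) (f : tupT)
  : tupT := [ffun i => (a (pi i))^-1 (f (pi i))].

Lemma wr_funK a pi : cancel (wr_fun a pi) (wr_inv a pi).
Proof.
by move=> f; apply/ffunP=> i; rewrite !ffunE !permK.
Qed.

Definition wr_perm a pi : {perm tupT} := perm (can_inj (@wr_funK a pi)).

Definition WmT : {set {perm tupT}} :=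
  [set wr_perm a pi | a in [set a : {ffun 'I_m -> {perm gT}} |
      [forall i, a i \in Aut T] &&
      [forall i, forall j, (a i) *: InnT == (a j) *: InnT]],
    pi in [set: {perm 'I_m}]].

Definition DmT : {set {perm tupT}} :=
  [set wr_perm [ffun => al] pi | al in Aut T, pi in [set: {perm 'I_m}]].

(* (phi_{t_1},...,phi_{t_{m-1}},1) with phi_t : x |-> t^-1 x t *)
Definition inn_tuple (t : {ffun 'I_m.-1 -> gT}) : {ffun 'I_m -> {perm gT}} :=
  [ffun i : 'I_m => (if @insub nat (fun n => n < m.-1) 'I_m.-1 (val i) is Some j
                    then conj_aut T (t j) else 1%g) : {perm gT}].

(* {D, D g} is a base for G acting on the right cosets [G:D] *)
Definition is_base_pair (t : {ffun 'I_m.-1 -> gT}) : bool :=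
  'C_WmT([set DmT; DmT :* wr_perm (inn_tuple t) 1%g] | 'Rs) == 1%g.

Definition Pm : rat :=
  (#|[set t : {ffun 'I_m.-1 -> gT} | [forall i, t i \in T] && is_base_pair t]|%:R
    / (#|T| ^ m.-1)%:R)%R.

End Defs.

From mathcomp Require Import all_boot all_order all_algebra all_fingroup all_solvable.
Set Implicit Arguments. Unset Strict Implicit. Unset Printing Implicit Defensive.
Import GroupScope Order.TTheory GRing.Theory Num.Theory.

(* Write m = k+1 and g = (phi_{t_1},...,phi_{t_k},1).  A diagonal
   element x = (al,...,al)pi of W(m,T) lies in D, so it fixes the coset D; if
   moreover al permutes the entries of (t_1,...,t_k,1) according to pi, then x
   commutes with g and hence also fixes D g.  So when {D, D g} is a base, no
   non-identity such x exists, which forces: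
   - the entries t_1,...,t_k,1 are pairwise distinct (use al = 1, pi a
     transposition), so R = {t_1,...,t_k} is a k-subset of T^#;
   - Aut(T,R) = 1 (a nontrivial al in Aut(T,R) permutes the entries).
   Hence every base tuple is an ordering of a k-subset R with Aut(T,R) = 1, so
   #(base tuples) <= #{R | Aut(T,R) = 1} * k!, while #S_k * k! <= |T|^k.
   Dividing gives P_{k+1}(T) <= #{R | Aut(T,R) = 1} / #S_k = 1 - Q_k(T).
   The argument only uses that T is nontrivial (which follows from T being
   non-abelian). *)

Lemma ratio_le (R : numFieldType) (a N C n f : nat) :
  a <= N * f -> C * f <= n -> N <= C ->
  (a%:R / n%:R <= N%:R / C%:R :> R)%R.
Proof.
move=> le_a le_Cf le_NC.
have [->|n_gt0] := posnP n; first by rewrite invr0 mulr0 divr_ge0.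
have [C0|C_gt0] := posnP C.
  have N0 : N = 0 by apply/eqP; rewrite -leqn0 -C0.
  by move: le_a; rewrite N0 leqn0 => /eqP->; rewrite !mul0r.
rewrite ler_pdivrMr ?ltr0n // mulrAC ler_pdivlMr ?ltr0n //.
rewrite -!natrM ler_nat (leq_trans (leq_mul le_a (leqnn C))) //.
by rewrite -mulnA (mulnC f) leq_mul.
Qed.

Lemma ffact_pred_le_exp (n j : nat) : n.-1 ^_ j <= n ^ j.
Proof.
rewrite ffact_prod (@leq_trans (\prod_(i < j) n)) //.
  by apply: leq_prod => i _; rewrite leq_subLR (leq_trans (leq_pred n)) ?leq_addl.
by rewrite prod_nat_const card_ord.
Qed.

Section Automorphisms.
Variables (gT : finGroupType) (T : {group gT}).

Lemma conj_aut1 : conj_aut T 1 = 1.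
Proof. exact: morph1. Qed.

(* Automorphisms transport inner automorphisms: al o phi_u = phi_{al u} o al,
   also outside T where all three permutations are the identity. *)
Lemma Aut_conj_aut (al : {perm gT}) (u y : gT) : al \in Aut T -> u \in T ->
  al (conj_aut T u y) = conj_aut T (al u) (al y).
Proof.
move=> Aal Tu; have [Ty | nTy] := boolP (y \in T).
  by rewrite !conj_autE ?Aut_closed // -(autmE Aal) morphJ.
by rewrite !(out_Aut _ nTy) // Aut_aut.
Qed.

End Automorphisms.

Section Wreath.
Variables (gT : finGroupType) (T : {group gT}) (m : nat).

Local Notation diag al pi := (wr_perm (m := m) [ffun=> al] pi).

Lemma wr_permE a pi (f : tupT gT m) i : wr_perm a pi f i = a i (f (pi^-1 i)).
Proof. by rewrite permE ffunE. Qed.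

Lemma diag_wr_permM (al be : {perm gT}) pi sg :
  diag al pi * diag be sg = diag (al * be) (pi * sg).
Proof.
apply/permP => f; apply/ffunP => i.
by rewrite permM !wr_permE !ffunE permM invMg permM.
Qed.

Lemma diag_in_WmT (al : {perm gT}) pi : al \in Aut T -> diag al pi \in WmT T m.
Proof.
move=> Aal; apply/imset2P; exists [ffun=> al] pi; rewrite ?inE //.
by apply/andP; split; apply/forallP => i; rewrite ?ffunE //;
  apply/forallP => j; rewrite !ffunE.
Qed.

Lemma diag_in_DmT (al : {perm gT}) pi : al \in Aut T -> diag al pi \in DmT T m.
Proof. by move=> Aal; apply/imset2P; exists al pi => //; rewrite inE. Qed.

Lemma DmT_rcoset x : x \in DmT T m -> DmT T m :* x = DmT T m.
Proof.
case/imset2P => be sg Abe _ ->; apply/eqP; rewrite eqEcard card_rcoset leqnn andbT.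
apply/subsetP => _ /rcosetP[_ /imset2P[al pi Aal _ ->] ->].
by rewrite diag_wr_permM diag_in_DmT ?groupM.
Qed.

Lemma stab_base_pair x g : x \in WmT T m -> x \in DmT T m -> commute g x ->
  x \in 'C_(WmT T m)([set DmT T m; DmT T m :* g] | 'Rs).
Proof.
move=> Wx Dx cgx; rewrite inE Wx; apply/astabP => X.
rewrite !inE /= rcosetE => /orP[] /eqP->; first exact: DmT_rcoset.
by rewrite -rcosetM cgx rcosetM DmT_rcoset.
Qed.

Lemma diag_ne1 (al : {perm gT}) pi (i : 'I_m) : al != 1 -> diag al pi != 1.
Proof.
move=> ne; have [y Hy] : exists y, al y != y.
  apply/existsP; apply: contraR ne; rewrite negb_exists => /forallP fix_al.
  by apply/eqP/permP => z; rewrite perm1; apply/eqP/negPn/fix_al.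
apply/eqP => E; have := congr1 (fun p : {perm tupT gT m} => p [ffun=> y] i) E.
by rewrite wr_permE !ffunE perm1 ffunE => /eqP; rewrite (negbTE Hy).
Qed.

Lemma diag_tperm_ne1 (y : gT) (i j : 'I_m) : y != 1 -> i != j ->
  diag (1 : {perm gT}) (tperm i j) != 1.
Proof.
move=> ny nij; apply/eqP => E.
pose f : tupT gT m := [ffun l => if l == i then y else 1].
have := congr1 (fun p : {perm tupT gT m} => p f j) E.
rewrite wr_permE !ffunE !perm1 tpermV tpermR eqxx ffunE eq_sym (negbTE nij).
by move=> /eqP; rewrite (negbTE ny).
Qed.

End Wreath.

Section BaseTuples.
Variables (gT : finGroupType) (T : {group gT}) (k : nat).

Definition padded (t : {ffun 'I_k -> gT}) (j : 'I_k.+1) : gT :=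
  if @insub nat (fun n => n < k) 'I_k (val j) is Some j' then t j' else 1.

Lemma inn_tuple_padded (t : {ffun 'I_k -> gT}) j :
  inn_tuple T (m := k.+1) t j = conj_aut T (padded t j).
Proof. by rewrite /inn_tuple ffunE /padded; case: insub => //; rewrite conj_aut1. Qed.

Lemma padded_in (t : {ffun 'I_k -> gT}) j : (forall i, t i \in T) -> padded t j \in T.
Proof. by rewrite /padded; case: insub. Qed.

Lemma padded_widen (t : {ffun 'I_k -> gT}) i : padded t (widen_ord (leqnSn k) i) = t i.
Proof.
rewrite /padded; case: insubP => [j _ /= ji|]; last by rewrite /= ltn_ord.
by congr (t _); apply: val_inj.
Qed.

Lemma padded_max (t : {ffun 'I_k -> gT}) : padded t ord_max = 1.
Proof. by rewrite /padded; case: insubP => [j /= |//]; rewrite ltnn. Qed.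

Lemma padded_cases (t : {ffun 'I_k -> gT}) j :
  (exists i, padded t j = t i) \/ padded t j = 1.
Proof. by rewrite /padded; case: insub => [i|]; [left; exists i | right]. Qed.

(* The criterion: a nontrivial diagonal element (al,...,al)pi, al in Aut T,
   with al permuting the padded tuple along pi, shows that {D, D g} is not a
   base, since it fixes D and commutes with g. *)
Lemma not_base_pair (t : {ffun 'I_k -> gT}) (al : {perm gT}) (pi : {perm 'I_k.+1}) :
  (forall i, t i \in T) -> al \in Aut T ->
  (forall j, al (padded t j) = padded t (pi j)) ->
  wr_perm [ffun=> al] pi != 1 -> ~~ is_base_pair T (m := k.+1) t.
Proof.
move=> Tt Aal al_pi ne1; apply: contra ne1 => /eqP C1.
set x := wr_perm _ pi; pose g := wr_perm (inn_tuple T (m := k.+1) t) 1.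
have cgx : commute g x.
  apply/permP => f; apply/ffunP => i.
  rewrite !permM !wr_permE !inn_tuple_padded !ffunE invg1 !perm1.
  by rewrite Aut_conj_aut ?padded_in // al_pi permKV.
have Wx := diag_in_WmT (m := k.+1) pi Aal; have Dx := diag_in_DmT (m := k.+1) pi Aal.
by have := stab_base_pair Wx Dx cgx; rewrite C1 inE.
Qed.

Definition base_tuples : {set {ffun 'I_k -> gT}} :=
  [set t : {ffun 'I_k -> gT} | [forall i, t i \in T] && is_base_pair T (m := k.+1) t].

Definition rigid_subsets : {set {set gT}} :=
  [set R in kSubsets T k | AutTR T R == 1].

Section Base.
Variables (y : gT) (t : {ffun 'I_k -> gT}).
Hypotheses (ny : y != 1) (Tt : forall i, t i \in T)
  (base : is_base_pair T (m := k.+1) t).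

Lemma padded_inj : injective (padded t).
Proof.
move=> i j E; apply/eqP; apply: contraTT base => nij.
apply: (not_base_pair (al := 1) (pi := tperm i j)) => //.
  by move=> l; rewrite perm1; case: tpermP => [->|->|].
exact: diag_tperm_ne1 ny nij.
Qed.

Lemma base_entry_ne1 i : t i != 1.
Proof.
apply/eqP => ti1.
have := padded_inj (etrans (padded_widen t i) (etrans ti1 (esym (padded_max t)))).
by move/(congr1 val) => /= Ei; move: (ltn_ord i); rewrite Ei ltnn.
Qed.

Lemma base_inj : injective t.
Proof.
move=> i j E.
have := padded_inj (etrans (padded_widen t i) (etrans E (esym (padded_widen t j)))).
by move/(congr1 val) => /= Ei; apply: val_inj.
Qed.

(* The set of entries of a base tuple has trivial setwise stabiliser in Aut T:
   an automorphism stabilising it permutes the padded tuple. *)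
Lemma base_AutTR_trivial : AutTR T [set t i | i in 'I_k] = 1.
Proof.
apply/trivgP/subsetP => al; rewrite inE => /andP[Aal /astabsP Nal].
rewrite inE; apply: contraTT base => ne.
have image j : exists j', padded t j' == al (padded t j).
  case: (padded_cases t j) => [[i ->]|->]; last first.
    by exists ord_max; rewrite padded_max -(autmE Aal) morph1.
  have /imsetP[i' _ E] : al (t i) \in [set t i | i in 'I_k].
    by rewrite -[al _]/(aperm _ _) Nal imset_f.
  by exists (widen_ord (leqnSn k) i'); rewrite padded_widen E.
pose f j := odflt j [pick j' | padded t j' == al (padded t j)].
have fE j : padded t (f j) = al (padded t j).
  rewrite /f; case: pickP => [j' /eqP //|none].
  by have [j' ] := image j; rewrite none.
have f_inj : injective f.
  by move=> j1 j2 E; apply/padded_inj/(perm_inj (s := al)); rewrite -!fE E.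
apply: (not_base_pair (pi := perm f_inj) Tt Aal); last exact: diag_ne1 ord0 ne.
by move=> j; rewrite permE fE.
Qed.

End Base.

(* Each base tuple is an injective enumeration of a rigid k-subset of T^#. *)
Lemma card_base_tuples (y : gT) : y != 1 ->
  #|base_tuples| <= #|rigid_subsets| * k`!.
Proof.
move=> ny; rewrite -sum1_card.
pose entries (t : {ffun 'I_k -> gT}) := [set t i | i in 'I_k].
rewrite (partition_big entries (mem rigid_subsets)).
  rewrite -sum_nat_const; apply: leq_sum => R; rewrite sum1dep_card.
  rewrite !inE => /andP[/andP[_ /eqP cardR] _].
  have <- : #|[set f : {ffun 'I_k -> gT} in ffun_on R | injectiveb f]| = k`!.
    by rewrite card_inj_ffuns_on card_ord cardR ffactnn.
  apply/subset_leq_card/subsetP => t.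
  rewrite !inE => /andP[/andP[/forallP Tt Bt] /eqP <-].
  apply/andP; split; first by apply/ffun_onP => i; apply: imset_f.
  exact/injectiveP/(base_inj ny Tt Bt).
move=> t; rewrite !inE => /andP[/forallP Tt Bt].
rewrite (base_AutTR_trivial ny Tt Bt) eqxx andbT card_imset ?card_ord ?eqxx.
  rewrite andbT; apply/subsetP => _ /imsetP[i _ ->].
  by rewrite !inE Tt (base_entry_ne1 ny Tt Bt).
exact: base_inj ny Tt Bt.
Qed.

(* #S_k = C(|T|-1, k), so #S_k * k! = (|T|-1)^_k <= |T|^k. *)
Lemma card_kSubsets : #|kSubsets T k| * k`! <= #|T| ^ k.
Proof.
rewrite cards_draws bin_ffact (cardsD1 1 T) group1.
exact: ffact_pred_le_exp.
Qed.

Lemma rigid_subsets_sub : #|rigid_subsets| <= #|kSubsets T k|.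
Proof. by apply/subset_leq_card/subsetP => R; rewrite inE => /andP[]. Qed.

(* Q_k(T) is the proportion complementary to the rigid k-subsets (with
   equality unless there are no k-subsets at all). *)
Lemma Qk_le : (Qk T k <= 1 - #|rigid_subsets|%:R / #|kSubsets T k|%:R)%R.
Proof.
set B := #|[set R in kSubsets T k | AutTR T R != 1]|.
have split : B + #|rigid_subsets| = #|kSubsets T k|.
  rewrite -(cardsID [set R | AutTR T R == 1] (kSubsets T k)) addnC.
  by congr (_ + _); apply: eq_card => R; rewrite !inE andbC.
rewrite /Qk -/B; have [C0|C_gt0] := posnP #|kSubsets T k|.
  by rewrite C0 invr0 !mulr0 subr0 ler01.
suff -> : (1 - #|rigid_subsets|%:R / #|kSubsets T k|%:R
           = B%:R / #|kSubsets T k|%:R :> rat)%R by [].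
by apply/eqP; rewrite subr_eq -mulrDl -natrD split divff // pnatr_eq0 -lt0n.
Qed.

Lemma Pm_le (y : gT) : y != 1 ->
  (Pm T k.+1 <= #|rigid_subsets|%:R / #|kSubsets T k|%:R)%R.
Proof.
move=> ny; exact: ratio_le (card_base_tuples ny) card_kSubsets rigid_subsets_sub.
Qed.

End BaseTuples.

Theorem lemma6p2 (gT : finGroupType) (T : {group gT}) (k : nat) :
  simple T -> ~~ abelian T -> 4 <= k ->
  (Qk T k <= 1 - Pm T k.+1)%R.
Proof.
move=> _ nonab _.
have [y _ ny] : exists2 y, y \in T & y != 1.
  by apply/trivgPn; apply: contraNneq nonab => ->; exact: abelian1.
by rewrite (le_trans (Qk_le T k)) // lerD2l lerN2 (Pm_le T k ny).
Qed.
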